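(* Let $L$ be a finite-dimensional Lie algebra over a field $F$. Then $L$ is solvable if and only if $\eta(L:M)=\dim(L/M)$ for all maximal subalgebras $M$ of $L$.
   Context: For a nonzero subalgebra $X$ of $L$, the strict core $k(X)$ is the sum of all ideals of $L$ that are proper subalgebras of $X$ (it is $0$ if there are none). For a maximal subalgebra $M$, a subalgebra $C$ is a completion of $M$ if $C\not\subseteq M$ but every proper subalgebra of $C$ that is an ideal of $L$ is contained in $M$; an ideal completion is a completion that is an ideal of $L$. The ideal index $\eta(L:M)$ is $\dim(C/k(C))$ for any ideal completion $C$ of $M$ (independent of the choice of $C$). *)

From HB Require Import structures.
From mathcomp Require Import all_boot all_order all_algebra.
From Stdlib Require Import ClassicalEpsilon.
Set Implicit Arguments. Unset Strict Implicit. Unset Printing Implicit Defensive.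
Import GRing.Theory.
Local Open Scope ring_scope.

Section Lie.
Variables (F : fieldType) (L : vectType F) (br : L -> L -> L).

Definition is_lie_bracket : Prop :=
  [/\ (forall a x y z, br (a *: x + y) z = a *: br x z + br y z),
      (forall a x y z, br x (a *: y + z) = a *: br x y + br x z),
      (forall x, br x x = 0) &
      (forall x y z, br x (br y z) + br y (br z x) + br z (br x y) = 0)].

(* [U, V] : the subspace spanned by all brackets [u, v], u in U, v in V
   (by bilinearity, spanned by brackets of basis vectors). *)
Definition bracket_space (U V : {vspace L}) : {vspace L} :=
  (<< [seq br u v | u <- vbasis U, v <- vbasis V] >>)%VS.

Definition derived (k : nat) : {vspace L} :=
  iter k (fun U => bracket_space U U) fullv.

Definition lie_solvable : Prop := exists n, derived n = 0%VS.

Definition lie_subalgebra (U : {vspace L}) : Prop :=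
  forall u v, u \in U -> v \in U -> br u v \in U.

Definition lie_ideal (U : {vspace L}) : Prop :=
  forall x u, u \in U -> br x u \in U.

Definition proper_sub (U V : {vspace L}) : Prop :=
  (U <= V)%VS /\ U <> V.

Definition maximal_subalgebra (M : {vspace L}) : Prop :=
  [/\ lie_subalgebra M, M <> fullv &
      forall N, lie_subalgebra N -> (M <= N)%VS -> N = M \/ N = fullv].

(* K is the sum of all ideals of L that are proper subalgebras of X,
   i.e. the least subspace containing all of them (0 if there are none). *)
Definition strict_core_spec (X K : {vspace L}) : Prop :=
  (forall I, lie_ideal I -> proper_sub I X -> (I <= K)%VS) /\
  (forall W, (forall I, lie_ideal I -> proper_sub I X -> (I <= W)%VS) ->
             (K <= W)%VS).

Definition strict_core (X : {vspace L}) : {vspace L} :=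
  epsilon (inhabits 0%VS) (strict_core_spec X).

Definition completion (M C : {vspace L}) : Prop :=
  [/\ lie_subalgebra C, ~ (C <= M)%VS &
      forall I, lie_subalgebra I -> proper_sub I C -> lie_ideal I ->
        (I <= M)%VS].

Definition ideal_completion (M C : {vspace L}) : Prop :=
  completion M C /\ lie_ideal C.

(* The ideal index eta(L:M) = dim(C / k(C)) for an ideal completion C of M
   (independent of the choice of C, per the paper). *)
Definition ideal_index (M : {vspace L}) : nat :=
  let C := epsilon (inhabits 0%VS) (ideal_completion M) in
  (\dim C - \dim (strict_core C))%N.

End Lie.

From Pilot Require Import Defs.
From mathcomp Require Import all_boot all_order all_algebra.
From Stdlib Require Import ClassicalEpsilon Classical.
From mathcomp Require Import zify.
Set Implicit Arguments. Unset Strict Implicit. Unset Printing Implicit Defensive.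
Import GRing.Theory.
Local Open Scope ring_scope.

(* Forward: if L is solvable and C is an ideal completion of the maximal
   subalgebra M, the derived ideal [C, C] is a proper ideal of C, so it lies in
   the strict core k(C) and hence in M. As M + C = L, this makes C :&: M an ideal,
   so k(C) = C :&: M and dim C/k(C) = dim C/(C :&: M) = dim L/M.
   Converse: if L is not solvable, its derived series stops at a perfect ideal
   S <> 0. Take an ideal N maximal with S not in N and put J = S + N. Since J/N
   is perfect, Engel's theorem yields b in J acting non-nilpotently on L/N. The
   Fitting null component of ad b plus N is then a proper subalgebra, and a
   maximal subalgebra M above it misses J, because L is the sum of that null
   component and the image of a power of ad b, which lies in J. If
   eta(L:M) = dim L/M, then C :&: M is an ideal; maximality of N forces
   C :&: M <= N and S <= C + N, whence b lies in N, which is absurd. *)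

Lemma ex_argmin (T : Type) (f : T -> nat) (P : T -> Prop) :
  (exists x, P x) -> exists2 x, P x & forall y, P y -> (f x <= f y)%N.
Proof.
move=> [x Px]; have [n fx] : exists n, f x = n by exists (f x).
elim/ltn_ind: n x Px fx => n IH x Px fx.
case: (classic (exists2 y, P y & (f y < f x)%N)) => [[y Py lt_yx] | no_lt].
  by apply: IH Py erefl; rewrite -fx.
exists x => // y Py; rewrite leqNgt; apply/negP => lt_yx; apply: no_lt; by exists y.
Qed.

Section Subspaces.
Variables (F : fieldType) (V : vectType F).
Implicit Types U W : {vspace V}.

Lemma eq_subv_dim U W : (U <= W)%VS -> (\dim W <= \dim U)%N -> U = W.
Proof. by move=> sUW leWU; apply/eqP; rewrite eqEdim sUW. Qed.

Lemma ex_maximal_vspace (P : {vspace V} -> Prop) : (exists U, P U) ->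
  exists2 U, P U & forall U', P U' -> (U <= U')%VS -> U' = U.
Proof.
move=> /(ex_argmin (fun U => \dim (fullv : {vspace V}) - \dim U)%N) [U PU Umax].
exists U => // U' PU' sUU'; apply/esym/eq_subv_dim => //.
by have := Umax U' PU'; have := dimvS (subvf U'); lia.
Qed.

Lemma ex_minimal_vspace (P : {vspace V} -> Prop) : (exists U, P U) ->
  exists2 U, P U & forall U', P U' -> (U' <= U)%VS -> U' = U.
Proof.
move=> /(ex_argmin (fun U => \dim U)) [U PU Umin].
by exists U => // U' PU' sU'U; apply: eq_subv_dim sU'U (Umin U' PU').
Qed.

Lemma decreasing_vspace_stable (D : nat -> {vspace V}) :
  (forall k, (D k.+1 <= D k)%VS) -> exists k, D k.+1 = D k.
Proof.
move=> sD; apply: NNPP => never_eq.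
have dim_drop k : (\dim (D k) + k <= \dim (D 0))%N.
  elim: k => [|k IH]; first by rewrite addn0.
  suff : (\dim (D k.+1) < \dim (D k))%N by lia.
  rewrite ltnNge; apply/negP => le_dim.
  by apply: never_eq; exists k; apply: eq_subv_dim (sD k) le_dim.
by have /(leq_trans (leq_addl _ _)) := dim_drop (\dim (D 0)).+1; rewrite ltnn.
Qed.

Definition lin_closed (P : V -> Prop) :=
  P 0 /\ forall a u w, P u -> P w -> P (a *: u + w).

(* The subspace of the elements satisfying [P]; it exists when [P] is linearly
   closed (mem_pred_vspace), and is an arbitrary subspace otherwise. *)
Definition pred_vspace (P : V -> Prop) : {vspace V} :=
  epsilon (inhabits 0%VS) (fun U => forall v, v \in U <-> P v).

Lemma mem_pred_vspace P : lin_closed P -> forall v, v \in pred_vspace P <-> P v.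
Proof.
move=> [P0 PD]; apply: (epsilon_spec (inhabits 0%VS) (fun U => forall v, v \in U <-> P v)).
have P_0 : forall v, v \in (0%VS : {vspace V}) -> P v by move=> v /vlineP[a ->]; rewrite scaler0.
have [U PU Umax] := ex_maximal_vspace (ex_intro (fun U => forall v, v \in U -> P v) _ P_0).
exists U => v; split=> [/PU // | Pv].
have PUv : forall w, w \in (U + <[v]>)%VS -> P w.
  by move=> w /memv_addP[u Uu [_ /vlineP[a ->] ->]]; rewrite addrC; apply: PD => //; apply: PU.
have /addv_idPl : (U + <[v]>)%VS = U := Umax _ PUv (addvSl U _).
by rewrite -memvE.
Qed.

Lemma vbasis_ind (P : V -> Prop) U : lin_closed P ->
  (forall x, x \in vbasis U -> P x) -> forall y, y \in U -> P y.
Proof.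
move=> linP Pbasis y Uy; apply/(mem_pred_vspace linP).
suff /subvP : (U <= pred_vspace P)%VS by apply.
rewrite -(span_basis (vbasisP U)).
by apply/span_subvP => x /Pbasis /(mem_pred_vspace linP).
Qed.

End Subspaces.

Section LinearProp.
Variables (F : fieldType) (U W : lmodType F) (f : U -> W).
Hypothesis linf : linear f.

Lemma lin0 : f 0 = 0.
Proof. by have := linf (-1) 0 0; rewrite scaler0 addr0 scaleN1r addNr. Qed.

Lemma linD x y : f (x + y) = f x + f y.
Proof. by have := linf 1 x y; rewrite !scale1r. Qed.

Lemma linZ a x : f (a *: x) = a *: f x.
Proof. by have := linf a x 0; rewrite !addr0 lin0 addr0. Qed.

Lemma linN x : f (- x) = - f x.
Proof. by rewrite -scaleN1r linZ scaleN1r. Qed.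

Lemma linB x y : f (x - y) = f x - f y.
Proof. by rewrite linD linN. Qed.

End LinearProp.

Lemma linear_iter (F : fieldType) (U : lmodType F) (f : U -> U) k :
  linear f -> linear (iter k f).
Proof. by move=> linf a x y; elim: k => //= k ->; rewrite linf. Qed.

Section LieAlgebra.
Variables (F : fieldType) (L : vectType F) (br : L -> L -> L).
Hypothesis hbr : is_lie_bracket br.
Implicit Types U I J N : {vspace L}.

Lemma linear_brl z : linear (br^~ z).
Proof. by case: hbr => h _ _ _ a x y; apply: h. Qed.

Lemma linear_brr x : linear (br x).
Proof. by case: hbr => _ h _ _ a y z; apply: h. Qed.

Lemma br0l z : br 0 z = 0.
Proof. exact: (lin0 (linear_brl z)). Qed.

Lemma br0r x : br x 0 = 0.
Proof. exact: (lin0 (linear_brr x)). Qed.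

Lemma brDl x y z : br (x + y) z = br x z + br y z.
Proof. exact: (linD (linear_brl z)). Qed.

Lemma brDr x y z : br x (y + z) = br x y + br x z.
Proof. exact: (linD (linear_brr x)). Qed.

Lemma brZl a x z : br (a *: x) z = a *: br x z.
Proof. exact: (linZ (linear_brl z)). Qed.

Lemma brZr a x z : br x (a *: z) = a *: br x z.
Proof. exact: (linZ (linear_brr x)). Qed.

Lemma brxx x : br x x = 0.
Proof. by case: hbr. Qed.

Lemma br_anti x y : br x y = - br y x.
Proof.
apply/eqP; rewrite -addr_eq0; have := brxx (x + y).
by rewrite brDl !brDr !brxx add0r addr0 => ->.
Qed.

Lemma ad_br x y v : br (br x y) v = br x (br y v) - br y (br x v).
Proof.
case: hbr => _ _ _ /(_ x y v) /eqP.
rewrite [br v (br x y)]br_anti [br v x]br_anti (linN (linear_brr y)).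
by rewrite subr_eq0 => /eqP.
Qed.

Lemma ad_derivation x u v : br x (br u v) = br (br x u) v + br u (br x v).
Proof. by rewrite ad_br subrK. Qed.

Lemma lie_ideal_subalgebra I : lie_ideal br I -> lie_subalgebra br I.
Proof. by move=> idI u v _; apply: idI. Qed.

Lemma lie_idealr I x u : lie_ideal br I -> u \in I -> br u x \in I.
Proof. by move=> idI Iu; rewrite br_anti memvN idI. Qed.

Lemma lie_ideal0 : lie_ideal br 0%VS.
Proof. by move=> x u; rewrite memv0 => /eqP ->; rewrite br0r mem0v. Qed.

Lemma lie_idealf : lie_ideal br fullv.
Proof. by move=> x u _; apply: memvf. Qed.

Lemma lie_ideal_add I J : lie_ideal br I -> lie_ideal br J -> lie_ideal br (I + J)%VS.
Proof.
by move=> idI idJ x _ /memv_addP[u Iu [v Jv ->]]; rewrite brDr memv_add ?idI ?idJ.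
Qed.

Lemma lie_subalgebra_add_ideal U I : lie_subalgebra br U -> lie_ideal br I ->
  lie_subalgebra br (U + I)%VS.
Proof.
move=> subU idI _ _ /memv_addP[u1 Uu1 [i1 Ii1 ->]] /memv_addP[u2 Uu2 [i2 Ii2 ->]].
rewrite brDl !brDr -addrA memv_add ?subU //.
by rewrite !memvD //; [apply: idI | apply: lie_idealr | apply: idI].
Qed.

Lemma mem_bracket_space U1 U2 u v : u \in U1 -> v \in U2 ->
  br u v \in bracket_space br U1 U2.
Proof.
have linP (P : L -> L) : linear P -> lin_closed (fun w => P w \in bracket_space br U1 U2).
  by move=> linf; split=> [|a w1 w2 h1 h2]; rewrite ?lin0 ?mem0v // linf memvD ?memvZ.
move=> Uu Uv; move: u Uu; apply: (vbasis_ind (linP _ (linear_brl v))) => u Bu.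
move: v Uv; apply: (vbasis_ind (linP _ (linear_brr u))) => v Bv.
by apply: memv_span; apply: allpairs_f.
Qed.

Lemma bracket_space_subv U1 U2 (W : {vspace L}) :
  (forall u v, u \in U1 -> v \in U2 -> br u v \in W) -> (bracket_space br U1 U2 <= W)%VS.
Proof.
move=> brW; apply/span_subvP => _ /allpairsP[[u v] [/= Bu Bv ->]].
by apply: brW; apply: vbasis_mem.
Qed.

Lemma bracket_spaceS U1 U2 : (U1 <= U2)%VS ->
  (bracket_space br U1 U1 <= bracket_space br U2 U2)%VS.
Proof.
by move=> /subvP sU; apply: bracket_space_subv => u v /sU Uu /sU Uv; apply: mem_bracket_space.
Qed.

Lemma bracket_space_subalgebra U : lie_subalgebra br U -> (bracket_space br U U <= U)%VS.
Proof. by move=> subU; apply: bracket_space_subv. Qed.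

Lemma bracket_space_ideal I : lie_ideal br I -> lie_ideal br (bracket_space br I I).
Proof.
move=> idI x; set D := bracket_space br I I.
have linxD : lin_closed (fun w => br x w \in D).
  by split=> [|a w1 w2 h1 h2]; rewrite ?br0r ?mem0v // linear_brr memvD ?memvZ.
suff /subvP sD : (D <= pred_vspace (fun w => br x w \in D))%VS.
  by move=> w /sD /(mem_pred_vspace linxD).
apply: bracket_space_subv => u v Iu Iv; apply/(mem_pred_vspace linxD).
by rewrite ad_derivation memvD // mem_bracket_space ?idI.
Qed.

Lemma derived_ideal k : lie_ideal br (derived br k).
Proof. by elim: k => [|k IH]; [exact: lie_idealf | exact: bracket_space_ideal]. Qed.

Lemma derived_subS k : (derived br k.+1 <= derived br k)%VS.
Proof. exact/bracket_space_subalgebra/lie_ideal_subalgebra/derived_ideal. Qed.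

Lemma lie_solvable_perfect_eq0 C : lie_solvable br ->
  bracket_space br C C = C -> C = 0%VS.
Proof.
move=> [n derived_n] perfC; apply/eqP; rewrite -subv0 -derived_n.
by elim: n {derived_n} => [|n IH]; rewrite ?subvf // -perfC bracket_spaceS.
Qed.

Lemma not_solvable_perfect_ideal : ~ lie_solvable br ->
  exists S, [/\ lie_ideal br S, S <> 0%VS & bracket_space br S S = S].
Proof.
move=> not_solv; have [k stable] := decreasing_vspace_stable derived_subS.
exists (derived br k); split=> //; first exact: derived_ideal.
by move=> derived_k; apply: not_solv; exists k.
Qed.
End LieAlgebra.

Section Engel.
Variables (F : fieldType) (X : vectType F) (b : X -> X -> X).
Hypothesis hb : is_lie_bracket b.
Implicit Types A K Z : {vspace X}.

Definition representation (V : vectType F) (rho : X -> V -> V) : Prop :=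
  [/\ forall x, linear (rho x), forall v, linear (rho^~ v) &
      forall x y v, rho (b x y) v = rho x (rho y v) - rho y (rho x v)].

Definition acts_into (V : vectType F) (rho : X -> V -> V) A (W N : {vspace V}) :=
  forall a w, a \in A -> w \in W -> rho a w \in N.

Definition nil_mod (V : vectType F) (rho : X -> V -> V) A (W N : {vspace V}) :=
  forall a w, a \in A -> w \in W -> exists m, iter m (rho a) w \in N.

Lemma adjoint_representation : representation b.
Proof. by split; [exact: linear_brr | exact: linear_brl | exact: ad_br]. Qed.

Lemma lie_subalgebra_addv_line K x : lie_subalgebra b K ->
  (forall k, k \in K -> b k x \in K) -> lie_subalgebra b (K + <[x]>)%VS.
Proof.
move=> subK normKx _ _ /memv_addP[k1 Kk1 [_ /vlineP[c1 ->] ->]]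
  /memv_addP[k2 Kk2 [_ /vlineP[c2 ->] ->]].
rewrite (brDl hb) !(brDr hb) !(brZl hb) !(brZr hb) (brxx hb) !scaler0 addr0.
apply: (subvP (addvSl K <[x]>)).
rewrite memvD ?memvZ // ?memvD ?memvZ //; [exact: subK | exact: normKx |].
by rewrite (br_anti hb) memvN normKx.
Qed.

Lemma maximal_subalgebra_addv_line Z A K x :
  (Z <= K)%VS -> (K <= A)%VS -> lie_subalgebra b K ->
  (forall K', [/\ (Z <= K')%VS, (K' <= A)%VS, K' <> A & lie_subalgebra b K'] ->
     (K <= K')%VS -> K' = K) ->
  x \in A -> x \notin K -> (forall k, k \in K -> b k x \in K) -> (K + <[x]>)%VS = A.
Proof.
move=> ZK KA subK Kmax Ax Kx normKx; apply: NNPP => neA.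
have /addv_idPl : (K + <[x]>)%VS = K.
  apply: Kmax (addvSl K _); split=> //; last exact: lie_subalgebra_addv_line.
    exact: subv_trans ZK (addvSl K _).
  by rewrite subv_add KA -memvE.
by rewrite -memvE (negbTE Kx).
Qed.

(* The inductive step of Engel's theorem: [x] normalizes [K], so it moves a
   vector killed by [K] modulo [N] along a chain of such vectors that eventually
   enters [N]; the last one outside [N] is killed by [K + <[x]>]. *)
Lemma engel_step (V : vectType F) (rho : X -> V -> V) K x (W N : {vspace V}) v0 :
  representation rho -> (forall k, k \in K -> b k x \in K) -> acts_into rho K N N ->
  (forall w, w \in W -> rho x w \in W) -> (forall w, w \in N -> rho x w \in N) ->
  v0 \in W -> v0 \notin N -> (forall k, k \in K -> rho k v0 \in N) ->
  (exists m, iter m (rho x) v0 \in N) ->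
  exists v, [/\ v \in W, v \notin N & forall a, a \in (K + <[x]>)%VS -> rho a v \in N].
Proof.
move=> [_ linl rho_br] normKx KN xW xN Wv0 Nv0 Kv0 nil_x.
pose good w := w \in W /\ forall k, k \in K -> rho k w \in N.
have good_x w : good w -> good (rho x w).
  move=> [Ww Kw]; split=> [|k Kk]; first exact: xW.
  have -> : rho k (rho x w) = rho x (rho k w) + rho (b k x) w by rewrite rho_br addrC subrK.
  by rewrite memvD ?xN ?Kw // normKx.
have good_iter m : good (iter m (rho x) v0) by elim: m => [|m IH]; [split | exact: good_x].
have [m Nm m_min] := ex_argmin id nil_x.
case: m Nm m_min => [|m] Nm m_min; first by rewrite Nm in Nv0.
have [Wm Km] := good_iter m.
exists (iter m (rho x) v0); split=> //.
  by apply/negP => /m_min; rewrite ltnn.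
move=> _ /memv_addP[k Kk [_ /vlineP[c ->] ->]].
by rewrite (linD (linl _)) (linZ (linl _)) memvD ?memvZ // Km.
Qed.

Lemma engel_trivial (V : vectType F) (rho : X -> V -> V) A (W N : {vspace V}) :
  (N <= W)%VS -> N <> W -> acts_into rho A W N ->
  exists v, [/\ v \in W, v \notin N & forall a, a \in A -> rho a v \in N].
Proof.
move=> NW NW' AWN; have /subvPn [v Wv Nv] : ~~ (W <= N)%VS.
  by apply/negP => WN; apply: NW'; apply/eqP; rewrite eqEsubv NW.
by exists v; split=> // a Aa; apply: AWN.
Qed.

(* Engel's theorem for [A] acting on [W / N], stated without quotients: [A]
   acts nilpotently on [W / N] and, modulo an ideal [Z] of [A] acting trivially
   on [W / N], also on itself. The ideal [Z] lets the induction pass to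
   subalgebras of [A] with the adjoint action on [A / K]. *)
Lemma engel (n : nat) (V : vectType F) (rho : X -> V -> V) A Z (W N : {vspace V}) :
  representation rho -> lie_subalgebra b A -> (Z <= A)%VS ->
  acts_into b A Z Z -> nil_mod b A A Z ->
  (N <= W)%VS -> N <> W -> acts_into rho A W W -> acts_into rho A N N ->
  acts_into rho Z W N -> nil_mod rho A W N -> (\dim A - \dim Z <= n)%N ->
  exists v, [/\ v \in W, v \notin N & forall a, a \in A -> rho a v \in N].
Proof.
elim: n V rho A Z W N => [|n IH] V rho A Z W N rep subA ZA AZ nilA NW NW' AW AN ZWN nilW dimAZ;
  have [/subvP sAZ|nAZ] := boolP (A <= Z)%VS;
  try by apply: engel_trivial => // a w /sAZ; apply: ZWN.
  by case/negP: nAZ; rewrite -(eq_subv_dim ZA) //; lia.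
have subZ : lie_subalgebra b Z by move=> u v Zu; apply: AZ; apply: (subvP ZA).
have ZA' : Z <> A by move=> eZA; rewrite eZA subvv in nAZ.
have [K [ZK KA KA' subK] Kmax] := ex_maximal_vspace
  (P := fun K => [/\ (Z <= K)%VS, (K <= A)%VS, K <> A & lie_subalgebra b K])
  (ex_intro _ Z (And4 (subvv Z) ZA ZA' subZ)).
have /subvP sKA := KA; have /subvP sZK := ZK.
have dimKZ : (\dim K - \dim Z <= n)%N.
  suff : (\dim K < \dim A)%N by lia.
  by rewrite ltnNge; apply/negP => /(eq_subv_dim KA).
have [x [Ax Kx normKx]] :
    exists x, [/\ x \in A, x \notin K & forall k, k \in K -> b k x \in K].
  apply: (IH X b K Z A K adjoint_representation) => //.
  - by move=> a z /sKA; apply: AZ.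
  - by move=> a a' /sKA Aa /sKA; apply: nilA.
  - by move=> a w /sKA; apply: subA.
  - by move=> z w Zz Aw; rewrite (br_anti hb) memvN sZK ?AZ.
  - by move=> a w /sKA Aa /(nilA _ _ Aa) [m Zm]; exists m; apply: sZK.
have [v0 [Wv0 Nv0 Kv0]] :
    exists v, [/\ v \in W, v \notin N & forall a, a \in K -> rho a v \in N].
  apply: (IH V rho K Z W N rep) => //.
  - by move=> a z /sKA; apply: AZ.
  - by move=> a a' /sKA Aa /sKA; apply: nilA.
  - by move=> a w /sKA; apply: AW.
  - by move=> a w /sKA; apply: AN.
  - by move=> a w /sKA; apply: nilW.
rewrite -(maximal_subalgebra_addv_line ZK KA subK Kmax Ax Kx normKx).
apply: (engel_step rep normKx _ (AW x ^~ Ax) (AN x ^~ Ax) Wv0 Nv0 Kv0 (nilW x v0 Ax Wv0)).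
by move=> k w /sKA; apply: AN.
Qed.
End Engel.

Section Completions.
Variables (F : fieldType) (L : vectType F) (br : L -> L -> L).
Hypothesis hbr : is_lie_bracket br.
Implicit Types C I J K M N U : {vspace L}.

Let upper_bound X W := forall I, lie_ideal br I -> Defs.proper_sub I X -> (I <= W)%VS.

Lemma strict_core_specP X : strict_core_spec br X (strict_core br X).
Proof.
apply: (epsilon_spec (inhabits 0%VS) (strict_core_spec br X)).
have [K ubK Kmin] := ex_minimal_vspace (ex_intro (upper_bound X) fullv (fun I _ _ => subvf I)).
exists K; split=> // W ubW; rewrite -(Kmin (K :&: W)%VS) ?capvSr ?capvSl //.
by move=> I idI IX; rewrite subv_cap ubK ?ubW.
Qed.

Lemma strict_core_sub X I : lie_ideal br I -> Defs.proper_sub I X -> (I <= strict_core br X)%VS.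
Proof. by case: (strict_core_specP X) => ub _; apply: ub. Qed.

Lemma strict_core_least X W : upper_bound X W -> (strict_core br X <= W)%VS.
Proof. by case: (strict_core_specP X) => _; apply. Qed.

Lemma strict_core_ideal X : lie_ideal br (strict_core br X).
Proof.
set K := strict_core br X.
have [I0 [idI0 I0K] I0max] := ex_maximal_vspace
  (ex_intro (fun I => lie_ideal br I /\ (I <= K)%VS) 0%VS (conj (lie_ideal0 hbr) (sub0v K))).
suff -> : K = I0 by [].
apply/eqP; rewrite eqEsubv I0K andbT; apply: strict_core_least => I idI IX.
apply/addv_idPl/I0max; last exact: addvSl.
by split; [exact: lie_ideal_add | rewrite subv_add I0K strict_core_sub].
Qed.

Lemma ideal_indexE M : M <> fullv ->
  exists2 C, ideal_completion br M C & ideal_index br M = (\dim C - \dim (strict_core br C))%N.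
Proof.
move=> MF; apply: ex_intro2 erefl.
apply: (epsilon_spec (inhabits 0%VS) (ideal_completion br M)).
have FM : ~ (fullv <= M)%VS by move=> FM; apply: MF; apply/eqP; rewrite eqEsubv subvf.
have [C [idC CM] Cmin] := ex_minimal_vspace
  (ex_intro (fun C => lie_ideal br C /\ ~ (C <= M)%VS) fullv (conj (lie_idealf br) FM)).
exists C; split=> //; split=> //; first exact: lie_ideal_subalgebra.
move=> I _ [IC IC'] idI; apply: NNPP => IM; exact: IC' (Cmin I (conj idI IM) IC).
Qed.

Lemma strict_core_completion_sub M C : ideal_completion br M C ->
  (strict_core br C <= C :&: M)%VS.
Proof.
move=> [[_ _ Cmin] _]; apply: strict_core_least => I idI [IC IC'].
by rewrite subv_cap IC Cmin //; exact: lie_ideal_subalgebra.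
Qed.

Lemma completion_addv M C : maximal_subalgebra br M -> ideal_completion br M C ->
  (M + C)%VS = fullv.
Proof.
move=> [subM _ Mmax] [[_ CM _] idC].
case: (Mmax _ (lie_subalgebra_add_ideal hbr subM idC) (addvSl M C)) => // MC.
by case: CM; rewrite -MC addvSr.
Qed.

Lemma codim_completion M C : maximal_subalgebra br M -> ideal_completion br M C ->
  (\dim (fullv : {vspace L}) - \dim M = \dim C - \dim (C :&: M))%N.
Proof.
move=> maxM compC; have := dimv_sum_cap M C.
rewrite completion_addv // capvC; have := dimvS (capvSl C M); have := dimvS (subvf M).
lia.
Qed.

Lemma ideal_index_codimP M : maximal_subalgebra br M ->
  exists2 C, ideal_completion br M C &
    ideal_index br M = (\dim (fullv : {vspace L}) - \dim M)%N <-> strict_core br C = (C :&: M)%VS.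
Proof.
move=> maxM; have [_ MF _] := maxM.
have [C compC ->] := ideal_indexE MF; exists C => //.
rewrite (codim_completion maxM compC).
have sKCM := strict_core_completion_sub compC.
split=> [eq_dim | -> //]; apply: (eq_subv_dim sKCM).
by have := dimvS sKCM; have := dimvS (capvSl C M); lia.
Qed.

Lemma lie_ideal_cap_completion M C : maximal_subalgebra br M -> ideal_completion br M C ->
  (bracket_space br C C <= M)%VS -> lie_ideal br (C :&: M)%VS.
Proof.
move=> maxM compC CCM x y; rewrite memv_cap => /andP[Cy My].
have [[subM _ _] [_ idC]] := (maxM, compC).
have : x \in (M + C)%VS by rewrite completion_addv // memvf.
case/memv_addP => m Mm [c Cc ->]; rewrite (brDl hbr) memv_cap !memvD ?idC //=.
  exact: subM.
by rewrite (subvP CCM) ?mem_bracket_space.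
Qed.

Lemma strict_core_completion_solvable M C : lie_solvable br ->
  maximal_subalgebra br M -> ideal_completion br M C -> strict_core br C = (C :&: M)%VS.
Proof.
move=> solv maxM compC; have [[subC CM _] idC] := compC.
have CC_core : (bracket_space br C C <= strict_core br C)%VS.
  apply: strict_core_sub; first exact: bracket_space_ideal.
  split; first exact: bracket_space_subalgebra.
  by move=> /(lie_solvable_perfect_eq0 hbr solv) C0; apply: CM; rewrite C0 sub0v.
have sCCM := subv_trans CC_core (subv_trans (strict_core_completion_sub compC) (capvSr C M)).
apply/eqP; rewrite eqEsubv strict_core_completion_sub // strict_core_sub //.
  exact: lie_ideal_cap_completion.
by split; [exact: capvSl | move=> CMC; apply: CM; rewrite -CMC capvSr].
Qed.
End Completions.

Section Fitting.
Variables (F : fieldType) (L : vectType F) (br : L -> L -> L).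
Hypothesis hbr : is_lie_bracket br.
Variable b : L.

Lemma linear_iter_ad k : linear (iter k (br b)).
Proof. exact/linear_iter/linear_brr. Qed.

Lemma iter_ad0 k : iter k (br b) 0 = 0.
Proof. by elim: k => //= k ->; rewrite (br0r hbr). Qed.

Lemma iter_ad_br_eq0 s u v k1 k2 : (k1 + k2 = s)%N ->
  iter k1 (br b) u = 0 -> iter k2 (br b) v = 0 -> iter s (br b) (br u v) = 0.
Proof.
elim: s u v k1 k2 => [|s IH] u v [|k1] k2 sum_s u0 v0; try lia.
- by move: u0 => /= ->; rewrite (br0l hbr).
- by move: u0 => /= ->; rewrite (br0l hbr) iter_ad0 (br0r hbr).
case: k2 sum_s v0 => [|k2] sum_s v0.
  by move: v0 => /= ->; rewrite (br0r hbr) iter_ad0 (br0r hbr).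
rewrite iterSr (ad_derivation hbr) (linD (linear_iter_ad _)).
by rewrite (IH _ _ k1 k2.+1) ?(IH _ _ k1.+1 k2) ?addr0 -?iterSr //; lia.
Qed.

Definition fitting_null : {vspace L} :=
  pred_vspace (fun v => exists k, iter k (br b) v = 0).

Lemma mem_fitting_null v : v \in fitting_null <-> exists k, iter k (br b) v = 0.
Proof.
apply: mem_pred_vspace; split=> [|a u w [k1 u0] [k2 w0]]; first by exists 0%N.
exists (k1 + k2)%N; rewrite linear_iter_ad {1}addnC !iterD u0 w0 !iter_ad0.
by rewrite scaler0 addr0.
Qed.

Lemma fitting_null_subalgebra : lie_subalgebra br fitting_null.
Proof.
move=> u v /mem_fitting_null[k1 u0] /mem_fitting_null[k2 v0].
by apply/mem_fitting_null; exists (k1 + k2)%N; apply: iter_ad_br_eq0 u0 v0.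
Qed.

Lemma mem_fitting_null_ad : b \in fitting_null.
Proof. by apply/mem_fitting_null; exists 1%N; apply: (brxx hbr). Qed.

Definition ad_image k : {vspace L} := pred_vspace (fun v => exists y, v = iter k (br b) y).

Lemma mem_ad_image k v : v \in ad_image k <-> exists y, v = iter k (br b) y.
Proof.
apply: mem_pred_vspace; split=> [|a _ _ [y1 ->] [y2 ->]]; first by exists 0; rewrite iter_ad0.
by exists (a *: y1 + y2); rewrite linear_iter_ad.
Qed.

Lemma ad_image_subS k : (ad_image k.+1 <= ad_image k)%VS.
Proof.
by apply/subvP => _ /mem_ad_image[y ->]; apply/mem_ad_image; exists (br b y); rewrite iterSr.
Qed.

Lemma ad_image_stable j : ad_image j.+1 = ad_image j ->
  forall i, ad_image (j + i) = ad_image j.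
Proof.
move=> stable; elim=> [|i IH]; first by rewrite addn0.
rewrite addnS; apply/eqP; rewrite eqEsubv -{1}IH ad_image_subS /=.
apply/subvP => v; rewrite -stable => /mem_ad_image[y ->].
have : iter j (br b) y \in ad_image (j + i) by rewrite IH; apply/mem_ad_image; exists y.
by case/mem_ad_image => z yz; apply/mem_ad_image; exists z; rewrite iterS yz.
Qed.

(* Fitting's lemma: [L] is the sum of the null component of [ad b] and the
   image of a power of [ad b]. *)
Lemma fitting_decomposition : exists2 e, (0 < e)%N &
  forall z, exists y, z - iter e (br b) y \in fitting_null.
Proof.
have [j stable] := decreasing_vspace_stable ad_image_subS.
exists j.+1 => // z.
have : iter j.+1 (br b) z \in ad_image (j.+1 + j.+1).
  by rewrite addSnnS (ad_image_stable stable) -stable; apply/mem_ad_image; exists z.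
case/mem_ad_image => y yz; exists y; apply/mem_fitting_null; exists j.+1.
by rewrite (linB (linear_iter_ad _)) yz iterD subrr.
Qed.
End Fitting.

Section Converse.
Variables (F : fieldType) (L : vectType F) (br : L -> L -> L).
Hypothesis hbr : is_lie_bracket br.
Implicit Types C J M N T : {vspace L}.

Lemma maximal_subalgebra_above T : lie_subalgebra br T -> T <> fullv ->
  exists2 M, maximal_subalgebra br M & (T <= M)%VS.
Proof.
move=> subT TF; have [M [subM TM MF] Mmax] := ex_maximal_vspace
  (ex_intro (fun M => [/\ lie_subalgebra br M, (T <= M)%VS & M <> fullv]) T
    (And3 subT (subvv T) TF)).
exists M => //; split=> // N' subN' MN'; have [->|N'F] := classic (N' = fullv); first by right.
by left; apply: (Mmax _ _ MN'); split=> //; apply: (subv_trans TM MN').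
Qed.

(* Otherwise Engel's theorem would make [J / N] nilpotent, contradicting
   [J = [J, J] + N]. *)
Lemma exists_ad_not_nil_mod J N : lie_ideal br J -> lie_ideal br N ->
  (N <= J)%VS -> N <> J -> (J <= bracket_space br J J + N)%VS ->
  exists b x, b \in J /\ forall m, iter m (br b) x \notin N.
Proof.
move=> idJ idN NJ NJ' JJN; apply: NNPP => no_b.
have nil b x : b \in J -> exists m, iter m (br b) x \in N.
  move=> Jb; apply: NNPP => no_m; apply: no_b; exists b, x; split=> // m.
  by apply/negP => Nm; apply: no_m; exists m.
have [Q [NQ QJ QJ' JQ] Qmax] := ex_maximal_vspace
  (P := fun Q => [/\ (N <= Q)%VS, (Q <= J)%VS, Q <> J & acts_into br J Q Q])
  (ex_intro _ N (And4 (subvv N) NJ NJ' (fun u q _ => idN u q))).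
have nilQ b x : b \in J -> exists m, iter m (br b) x \in Q.
  by move=> /(nil b x) [m Nm]; exists m; apply: (subvP NQ).
have [v [Jv Qv Jv_Q]] :
    exists v, [/\ v \in J, v \notin Q & forall a, a \in J -> br a v \in Q].
  apply: (engel hbr (n := (\dim J - \dim Q)%N) (A := J) (Z := Q) (W := J) (N := Q)
    (adjoint_representation hbr)) => //.
  - exact: lie_ideal_subalgebra.
  - by move=> a a' Ja _; apply: nilQ.
  - by move=> a w _; apply: idJ.
  - by move=> z w Qz Jw; rewrite (br_anti hbr) memvN JQ.
  - by move=> a w Ja _; apply: nilQ.
have eJ : (Q + <[v]>)%VS = J.
  apply: NNPP => neJ; have /addv_idPl : (Q + <[v]>)%VS = Q.
    apply: Qmax (addvSl Q _); split=> //.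
    - exact: subv_trans NQ (addvSl Q _).
    - by rewrite subv_add QJ -memvE.
    - move=> u _ Ju /memv_addP[q Qq [_ /vlineP[c ->] ->]].
      rewrite (brDr hbr) (brZr hbr); apply: (subvP (addvSl Q _)).
      by rewrite memvD ?memvZ ?Jv_Q // JQ.
  by rewrite -memvE (negbTE Qv).
apply: QJ'; apply/eqP; rewrite eqEsubv QJ (subv_trans JJN) // subv_add (subv_trans NQ) // andbT.
apply: bracket_space_subv => u w Ju; rewrite -eJ => /memv_addP[q Qq [_ /vlineP[c ->] ->]].
by rewrite (brDr hbr) (brZr hbr) memvD ?memvZ ?Jv_Q // JQ.
Qed.

Lemma maximal_subalgebra_missing_ideal J N b x : lie_ideal br J -> lie_ideal br N ->
  b \in J -> (forall m, iter m (br b) x \notin N) ->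
  exists M, [/\ maximal_subalgebra br M, b \in M, (N <= M)%VS & ~ (J <= M)%VS].
Proof.
move=> idJ idN Jb bx; set T := (fitting_null br b + N)%VS.
have iterN m n : n \in N -> iter m (br b) n \in N by elim: m => //= m IH /IH; apply: idN.
have TF : T <> fullv.
  move=> TF; have : x \in T by rewrite TF memvf.
  case/memv_addP => l /(mem_fitting_null hbr)[k l0] [n Nn xE]; case/negP: (bx k).
  by rewrite xE (linD (linear_iter_ad hbr b k)) l0 add0r iterN.
have [M maxM TM] := maximal_subalgebra_above
  (lie_subalgebra_add_ideal hbr (fitting_null_subalgebra hbr (b := b)) idN) TF.
have /subvP nullM := subv_trans (addvSl _ _) TM.
exists M; split=> //; first exact/nullM/(mem_fitting_null_ad hbr).
  exact: subv_trans (addvSr _ _) TM.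
move=> /subvP JM; have [_ MF _] := maxM; apply: MF; apply/eqP; rewrite eqEsubv subvf /=.
have [e e_gt0 decomp] := fitting_decomposition hbr b.
apply/subvP => z _; have [y zy] := decomp z.
rewrite -(subrK (iter e (br b) y) z) memvD //; [exact: nullM | apply: JM].
by case: e e_gt0 {decomp zy} => // e _ /=; apply: lie_idealr.
Qed.

Lemma lie_solvable_of_ideal_index :
  (forall M, maximal_subalgebra br M ->
     ideal_index br M = (\dim (fullv : {vspace L}) - \dim M)%N) -> lie_solvable br.
Proof.
move=> index_codim; apply: NNPP => not_solv.
have [S [idS S0 perfS]] := not_solvable_perfect_ideal hbr not_solv.
have S_0 : ~ (S <= 0)%VS by rewrite subv0 => /eqP.
have [N [idN SN] Nmax] := ex_maximal_vspace
  (ex_intro (fun N => lie_ideal br N /\ ~ (S <= N)%VS) 0%VS (conj (lie_ideal0 hbr) S_0)).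
have [b [x [Jb bx]]] : exists b x, b \in (S + N)%VS /\ forall m, iter m (br b) x \notin N.
  apply: exists_ad_not_nil_mod => //; first exact: lie_ideal_add; first exact: addvSr.
    by move=> NSN; apply: SN; rewrite NSN addvSl.
  rewrite subv_add addvSr andbT -{1}perfS.
  exact: subv_trans (bracket_spaceS hbr (addvSl S N)) (addvSl _ _).
have [M [maxM Mb NM SNM]] := maximal_subalgebra_missing_ideal (lie_ideal_add hbr idS idN) idN Jb bx.
have [C compC /iffLR core_cap] := ideal_index_codimP hbr maxM.
have [[_ CM _] idC] := compC.
have idCM : lie_ideal br (C :&: M)%VS.
  by rewrite -core_cap ?index_codim //; exact: strict_core_ideal.
have CMN : (C :&: M <= N)%VS.
  have S_CMN : ~ (S <= C :&: M + N)%VS.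
    move=> S_CMN; apply: SNM; rewrite subv_add NM andbT (subv_trans S_CMN) //.
    by rewrite subv_add capvSr.
  by rewrite -(Nmax _ (conj (lie_ideal_add hbr idCM idN) S_CMN) (addvSr _ _)) addvSl.
have SCN : (S <= C + N)%VS.
  apply: NNPP => S_CN; apply: CM; apply: subv_trans NM.
  by rewrite -(Nmax _ (conj (lie_ideal_add hbr idC idN) S_CN) (addvSr _ _)) addvSl.
have : b \in (C + N)%VS by apply: (subvP _ _ Jb); rewrite subv_add SCN addvSr.
case/memv_addP => c Cc [n Nn bE].
have Nc : c \in N.
  apply: (subvP CMN); rewrite memv_cap Cc -[c](addrK n) -bE memvB //.
  exact: (subvP NM).
by case/negP: (bx 1%N); rewrite /= bE lie_idealr ?memvD.
Qed.
End Converse.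

Theorem corollary2p6 (F : fieldType) (L : vectType F) (br : L -> L -> L)
  (hbr : is_lie_bracket br) :
  lie_solvable br <->
  (forall M : {vspace L}, maximal_subalgebra br M ->
     ideal_index br M = (\dim (fullv : {vspace L}) - \dim M)%N).
Proof.
split=> [solv M maxM|]; last exact: lie_solvable_of_ideal_index.
have [C compC ->] := ideal_index_codimP hbr maxM.
exact: strict_core_completion_solvable.
Qed.
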